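(* There is an operator $\rho_{AB}\in(\mathsf{M}_3\otimes\mathsf{M}_3)^+$ which is $2$-max-extendible but not $2$-PSD-extendible.
   Context: $\mathsf{M}_d^{\mathrm{sa}}$ is the real vector space of Hermitian $d\times d$ complex matrices and $\mathsf{M}_d^+$ the proper cone of positive semidefinite ones; $(\mathsf{M}_{d_1}\otimes\mathsf{M}_{d_2})^+$ denotes positive semidefinite operators on $\mathbf{C}^{d_1}\otimes\mathbf{C}^{d_2}$. For proper cones, $\mathsf{C}_1\otimes_{\max}\mathsf{C}_2=\{z:(f\otimes g)(z)\ge0\ \forall f\in\mathsf{C}_1^*,g\in\mathsf{C}_2^*\}$ where $\mathsf{C}^*$ is the dual cone. The map $\gamma_k^{\mathrm{Tr}}=\frac1k\sum_{j=1}^k\mathrm{Tr}^{\otimes(j-1)}\otimes\mathrm{Id}_{\mathsf{M}_{d_2}^{\mathrm{sa}}}\otimes\mathrm{Tr}^{\otimes(k-j)}$. An operator $\rho_{AB}\in(\mathsf{M}_{d_1}\otimes\mathsf{M}_{d_2})^+$ is $k$-max-extendible if there is $\sigma\in\mathsf{M}_{d_1}^+\otimes_{\max}(\mathsf{M}_{d_2}^+)^{\otimes_{\max}k}$ with $\rho_{AB}=(\mathrm{Id}\otimes\gamma_k^{\mathrm{Tr}})(\sigma)$; it is $k$-PSD-extendible if such $\sigma$ can be chosen positive semidefinite (in $(\mathsf{M}_{d_1}\otimes\mathsf{M}_{d_2}^{\otimes k})^+$). *)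

From HB Require Import structures.
From mathcomp Require Import all_boot all_order all_algebra.
From mathcomp Require Import reals.
From mathcomp Require Import complex.
Set Implicit Arguments. Unset Strict Implicit. Unset Printing Implicit Defensive.
Import Order.TTheory GRing.Theory Num.Theory.
Local Open Scope ring_scope.

(* Operators on C^I (I a finite index type) are represented by their
   matrix entries X i j, i.e. functions I -> I -> C.  Composite systems
   use product index types: C^I (x) C^J = C^(I * J)%type. *)
Definition op (C : numClosedFieldType) (I : finType) := I -> I -> C.

Section Ops.
Variable C : numClosedFieldType.

Definition hermitian (I : finType) (X : op C I) : Prop :=
  forall i j, X i j = (X j i)^*.

Definition psd (I : finType) (X : op C I) : Prop :=
  hermitian X /\
  forall v : I -> C, 0 <= \sum_i \sum_j (v i)^* * X i j * v j.

(* Tr(F X) : the trace pairing identifying the real-linear functionals on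
   Hermitian operators with Hermitian operators *)
Definition trpair (I : finType) (F X : op C I) : C :=
  \sum_i \sum_j F i j * X j i.

Definition tens (I J : finType) (X : op C I) (Y : op C J) : op C (I * J)%type :=
  fun p q => X p.1 q.1 * Y p.2 q.2.

Definition dual (I : finType) (K : op C I -> Prop) (F : op C I) : Prop :=
  hermitian F /\ forall z, K z -> 0 <= trpair F z.

Definition maxtens (I J : finType) (K1 : op C I -> Prop) (K2 : op C J -> Prop)
    (z : op C (I * J)%type) : Prop :=
  hermitian z /\
  forall F G, dual K1 F -> dual K2 G -> 0 <= trpair (tens F G) z.

(* (Id (x) gamma_2^Tr)(sigma) for sigma on A (x) B1 (x) B2 :
   (1/2) (Tr_{B2} sigma + Tr_{B1} sigma) *)
Definition gamma2 (I J : finType) (s : op C (I * (J * J))%type) : op C (I * J)%type :=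
  fun p q => 2^-1 * (\sum_k s (p.1, (p.2, k)) (q.1, (q.2, k))
                   + \sum_k s (p.1, (k, p.2)) (q.1, (k, q.2))).

Definition max_extendible2 (I J : finType) (rho : op C (I * J)%type) : Prop :=
  psd rho /\
  exists s : op C (I * (J * J))%type,
    maxtens (@psd I) (maxtens (@psd J) (@psd J)) s /\
    forall p q, rho p q = gamma2 s p q.

Definition psd_extendible2 (I J : finType) (rho : op C (I * J)%type) : Prop :=
  psd rho /\
  exists s : op C (I * (J * J))%type, psd s /\ forall p q, rho p q = gamma2 s p q.

End Ops.

From Pilot Require Import Defs.
From HB Require Import structures.
From mathcomp Require Import all_boot all_order all_algebra.
From mathcomp Require Import reals complex.
From mathcomp Require boolp.
From Stdlib Require Import BinNums BinInt.
From mathcomp Require Import ssrZ ring.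
Import Order.TTheory GRing.Theory Num.Theory.
Import ssrZ.Instances.
Set Implicit Arguments. Unset Strict Implicit.
Local Open Scope ring_scope.

(* The example is an explicit integer matrix; each property is reduced to exact integer
   identities checked by computation.
   - rho is PSD: a positive multiple of it is a Gram matrix sum_t c_t w_t w_t^T, c_t >= 0.
   - The extension is sigma = P + (T (x) id)(Q) with P, Q Gram matrices and T the transpose
     on A. The dual of PSD (x)max PSD consists of PSD operators, so every rank-one PSD
     operator lies in PSD (x)max (PSD (x)max PSD); this cone is stable under T (x) id because
     the dual cone PSD of its first factor is stable under transposition.
   - A witness W has a Gram-matrix lift W_{AB1} (x) 1_{B2} + W_{AB2} (x) 1_{B1}, which is twice
     the adjoint of gamma_2; so Tr(W (Id (x) gamma_2)(s)) >= 0 for every PSD s, whereas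
     Tr(W rho) < 0. *)

Section OperatorCones.
Variable C : numClosedFieldType.

Lemma op_ext (I : finType) (X Y : op C I) : (forall x y, X x y = Y x y) -> X = Y.
Proof. by move=> XY; apply: boolp.funext => x; apply: boolp.funext => y; apply: XY. Qed.

Lemma sum_pair (I J : finType) (F : I * J -> C) : \sum_p F p = \sum_a \sum_b F (a, b).
Proof. by rewrite pair_big /=; apply: eq_bigr => -[a b]. Qed.

Lemma sum_delta (J : finType) (k : J) (f : J -> C) : \sum_l (k == l)%:R * f l = f k.
Proof.
rewrite (bigD1 k) //= eqxx mul1r big1 ?addr0 // => l.
by rewrite eq_sym => /negPf ->; rewrite mul0r.
Qed.

Definition rank1 (I : finType) (u : I -> C) : op C I := fun x y => u x * (u y)^*.

Definition opsum (I : finType) (T : Type) (L : seq T) (c : T -> C) (Z : T -> op C I) :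
  op C I := fun x y => \sum_(t <- L) c t * Z t x y.

Lemma trpairC (I : finType) (X Y : op C I) : trpair X Y = trpair Y X.
Proof.
rewrite /trpair exchange_big; apply: eq_bigr => i _; apply: eq_bigr => j _.
exact: mulrC.
Qed.

Lemma trpair_rank1 (I : finType) (X : op C I) (v : I -> C) :
  trpair X (rank1 v) = \sum_i \sum_j (v i)^* * X i j * v j.
Proof. by apply: eq_bigr => i _; apply: eq_bigr => j _; rewrite /rank1; ring. Qed.

Lemma trpair_add (I : finType) (X Y Z : op C I) :
  trpair X (fun x y => Y x y + Z x y) = trpair X Y + trpair X Z.
Proof.
rewrite /trpair -big_split; apply: eq_bigr => i _.
by rewrite -big_split; apply: eq_bigr => j _; rewrite mulrDr.
Qed.

Lemma trpair_opsum (I : finType) (T : Type) (L : seq T) (c : T -> C) (Z : T -> op C I)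
    (X : op C I) :
  trpair X (opsum L c Z) = \sum_(t <- L) c t * trpair X (Z t).
Proof.
rewrite /trpair.
transitivity (\sum_i \sum_j \sum_(t <- L) c t * (X i j * Z t j i)).
  apply: eq_bigr => i _; apply: eq_bigr => j _; rewrite mulr_sumr.
  by apply: eq_bigr => t _; rewrite mulrCA.
under eq_bigr => i _ do rewrite exchange_big /=.
rewrite exchange_big /=; apply: eq_bigr => t _.
by rewrite mulr_sumr; apply: eq_bigr => i _; rewrite mulr_sumr.
Qed.

Lemma trpair_opsum_ge0 (I : finType) (T : eqType) (L : seq T) (c : T -> C)
    (Z : T -> op C I) (X : op C I) :
  {in L, forall t, 0 <= c t} -> {in L, forall t, 0 <= trpair X (Z t)} ->
  0 <= trpair X (opsum L c Z).
Proof.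
move=> c_ge0 XZ_ge0; rewrite trpair_opsum big_seq.
by apply: sumr_ge0 => t Lt; rewrite mulr_ge0 ?c_ge0 ?XZ_ge0.
Qed.

Lemma hermitian_opsum (I : finType) (T : eqType) (L : seq T) (c : T -> C)
    (Z : T -> op C I) :
  {in L, forall t, 0 <= c t} -> {in L, forall t, Defs.hermitian (Z t)} ->
  Defs.hermitian (opsum L c Z).
Proof.
move=> c_ge0 hZ x y; rewrite /opsum rmorph_sum !big_seq; apply: eq_bigr => t Lt.
by rewrite rmorphM /= conj_Creal ?ger0_real ?c_ge0 // (hZ t Lt x y).
Qed.

Lemma hermitian_rank1 (I : finType) (u : I -> C) : Defs.hermitian (rank1 u).
Proof. by move=> i j; rewrite /rank1 rmorphM /= conjCK mulrC. Qed.

Lemma psd_rank1 (I : finType) (u : I -> C) : psd (rank1 u).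
Proof.
split=> [|v]; first exact: hermitian_rank1.
have -> : \sum_i \sum_j (v i)^* * rank1 u i j * v j =
    (\sum_i (v i)^* * u i) * (\sum_i (v i)^* * u i)^*.
  rewrite mulr_suml; apply: eq_bigr => i _.
  rewrite rmorph_sum mulr_sumr; apply: eq_bigr => j _.
  by rewrite /rank1 rmorphM /= conjCK; ring.
exact: mul_conjC_ge0.
Qed.

Lemma psd_opsum (I : finType) (T : eqType) (L : seq T) (c : T -> C) (Z : T -> op C I) :
  {in L, forall t, 0 <= c t} -> {in L, forall t, psd (Z t)} -> psd (opsum L c Z).
Proof.
move=> c_ge0 psdZ; split=> [|v].
  by apply: hermitian_opsum => // t /psdZ[].
rewrite -trpair_rank1 trpairC; apply: trpair_opsum_ge0 => // t /psdZ[_ Z_ge0].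
by rewrite trpairC trpair_rank1.
Qed.

Lemma psd_dual_psd (I : finType) (F : op C I) : dual (@psd C I) F -> psd F.
Proof. by move=> [hF dF]; split=> // v; rewrite -trpair_rank1; apply/dF/psd_rank1. Qed.


Definition ptrpair (I J : finType) (G : op C J) (Z : op C (I * J)%type) : op C I :=
  fun i j => \sum_a \sum_b G a b * Z (i, b) (j, a).

Lemma trpair_tens (I J : finType) (F : op C I) (G : op C J) (Z : op C (I * J)%type) :
  trpair (tens F G) Z = trpair F (ptrpair G Z).
Proof.
rewrite /trpair sum_pair; apply: eq_bigr => i _.
under eq_bigr => k _ do rewrite sum_pair.
rewrite exchange_big /=; apply: eq_bigr => j _.
rewrite /ptrpair mulr_sumr; apply: eq_bigr => a _.
by rewrite mulr_sumr; apply: eq_bigr => b _; rewrite /tens /= mulrA.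
Qed.

Lemma psd_ptrpair_rank1 (I J : finType) (G : op C J) (u : I * J -> C) :
  psd G -> psd (ptrpair G (rank1 u)).
Proof.
move=> [hG G_ge0]; split.
  move=> i j; rewrite /ptrpair rmorph_sum exchange_big /=; apply: eq_bigr => a _.
  rewrite rmorph_sum; apply: eq_bigr => b _.
  by rewrite /rank1 !rmorphM /= conjCK -hG; ring.
move=> v; pose y b := \sum_i (v i)^* * u (i, b).
suff -> : \sum_i \sum_j (v i)^* * ptrpair G (rank1 u) i j * v j =
          \sum_a \sum_b (y a)^* * G a b * y b by apply: G_ge0.
transitivity (\sum_i \sum_j \sum_a \sum_b
                (v i)^* * (G a b * u (i, b) * (u (j, a))^*) * v j).
  apply: eq_bigr => i _; apply: eq_bigr => j _.
  rewrite /ptrpair mulr_sumr mulr_suml; apply: eq_bigr => a _.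
  rewrite mulr_sumr mulr_suml; apply: eq_bigr => b _.
  by rewrite /rank1 !mulrA.
transitivity (\sum_a \sum_b \sum_j \sum_i
                (v i)^* * (G a b * u (i, b) * (u (j, a))^*) * v j).
  under eq_bigr => i _ do
    (rewrite exchange_big /=; under eq_bigr => a _ do rewrite exchange_big /=).
  rewrite exchange_big /=; apply: eq_bigr => a _.
  by rewrite exchange_big /=; apply: eq_bigr => b _; rewrite exchange_big.
apply: eq_bigr => a _; apply: eq_bigr => b _.
rewrite /y rmorph_sum mulr_suml mulr_suml; apply: eq_bigr => j _.
rewrite mulr_sumr; apply: eq_bigr => i _.
by rewrite rmorphM /= conjCK; ring.
Qed.

Lemma maxtens_rank1 (I J : finType) (K : op C J -> Prop) (u : I * J -> C) :
  (forall G, dual K G -> psd G) -> maxtens (@psd C I) K (rank1 u).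
Proof.
move=> dualK_psd; split=> [|F G [_ F_ge0] /dualK_psd G_psd]; first exact: hermitian_rank1.
by rewrite trpair_tens; apply/F_ge0/psd_ptrpair_rank1.
Qed.

Lemma psd_dual_maxtens (J : finType) (G : op C (J * J)%type) :
  dual (maxtens (@psd C J) (@psd C J)) G -> psd G.
Proof.
move=> [hG dG]; split=> // v; rewrite -trpair_rank1.
by apply/dG/maxtens_rank1 => F; apply: psd_dual_psd.
Qed.

Definition trT (I : finType) (X : op C I) : op C I := fun i j => X j i.

Lemma dual_psd_trT (I : finType) (F : op C I) : dual (@psd C I) F -> dual (@psd C I) (trT F).
Proof.
move=> [hF dF]; split=> [i j|Z [hZ Z_ge0]]; first by rewrite /trT hF.
rewrite /trpair exchange_big -/(trpair F (trT Z)) /=; apply: dF; split=> [i j|v].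
  by rewrite /trT hZ.
pose w i := (v i)^*.
have -> : \sum_i \sum_j (v i)^* * trT Z i j * v j = \sum_i \sum_j (w i)^* * Z i j * w j.
  rewrite exchange_big /=; apply: eq_bigr => i _; apply: eq_bigr => j _.
  by rewrite /trT /w conjCK; ring.
exact: Z_ge0.
Qed.

Definition ptA (I J : finType) (Z : op C (I * J)%type) : op C (I * J)%type :=
  fun x y => Z (y.1, x.2) (x.1, y.2).

Lemma trpair_tens_ptA (I J : finType) (F : op C I) (G : op C J) (Z : op C (I * J)%type) :
  trpair (tens F G) (ptA Z) = trpair (tens (trT F) G) Z.
Proof.
rewrite !trpair_tens /trpair exchange_big; apply: eq_bigr => i _; apply: eq_bigr => j _.
by rewrite /trT /ptrpair /ptA.
Qed.

Lemma maxtens_ptA (I J : finType) (K : op C J -> Prop) (Z : op C (I * J)%type) :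
  maxtens (@psd C I) K Z -> maxtens (@psd C I) K (ptA Z).
Proof.
move=> [hZ Z_ge0]; split=> [x y|F G dF dG]; first by rewrite /ptA hZ.
by rewrite trpair_tens_ptA; apply: Z_ge0 => //; apply: dual_psd_trT.
Qed.

Lemma maxtens_add (I J : finType) (K1 : op C I -> Prop) (K2 : op C J -> Prop)
    (Y Z : op C (I * J)%type) :
  maxtens K1 K2 Y -> maxtens K1 K2 Z -> maxtens K1 K2 (fun x y => Y x y + Z x y).
Proof.
move=> [hY Y_ge0] [hZ Z_ge0]; split=> [x y|F G dF dG]; first by rewrite hY hZ rmorphD.
by rewrite trpair_add addr_ge0 ?Y_ge0 ?Z_ge0.
Qed.

Lemma maxtens_opsum (I J : finType) (K1 : op C I -> Prop) (K2 : op C J -> Prop)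
    (T : eqType) (L : seq T) (c : T -> C) (Z : T -> op C (I * J)%type) :
  {in L, forall t, 0 <= c t} -> {in L, forall t, maxtens K1 K2 (Z t)} ->
  maxtens K1 K2 (opsum L c Z).
Proof.
move=> c_ge0 maxZ; split; first by apply: hermitian_opsum => // t /maxZ[].
by move=> F G dF dG; apply: trpair_opsum_ge0 => // t /maxZ[_]; apply.
Qed.


Definition gamma2_adj (I J : finType) (W : op C (I * J)%type) : op C (I * (J * J))%type :=
  fun x y => W (x.1, x.2.1) (y.1, y.2.1) * (x.2.2 == y.2.2)%:R
           + W (x.1, x.2.2) (y.1, y.2.2) * (x.2.1 == y.2.1)%:R.

Lemma trpair_gamma2 (I J : finType) (W : op C (I * J)%type) (s : op C (I * (J * J))%type) :
  trpair W (gamma2 s) = 2^-1 * trpair (gamma2_adj W) s.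
Proof.
have sum_last (F : I * (J * J) -> C) : \sum_x F x = \sum_(p : I * J) \sum_k F (p.1, (p.2, k)).
  by rewrite sum_pair [RHS]sum_pair; apply: eq_bigr => a _; rewrite sum_pair.
have sum_mid (F : I * (J * J) -> C) : \sum_x F x = \sum_(p : I * J) \sum_k F (p.1, (k, p.2)).
  by rewrite sum_pair [RHS]sum_pair; apply: eq_bigr => a _; rewrite sum_pair exchange_big.
have trace_last : \sum_x \sum_y W (x.1, x.2.1) (y.1, y.2.1) * (x.2.2 == y.2.2)%:R * s y x
    = \sum_p \sum_q W p q * \sum_k s (q.1, (q.2, k)) (p.1, (p.2, k)).
  rewrite sum_last; apply: eq_bigr => -[a b] _ /=.
  under eq_bigr => k _ do rewrite sum_last.
  rewrite exchange_big /=; apply: eq_bigr => -[c d] _ /=.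
  rewrite mulr_sumr; apply: eq_bigr => k _.
  transitivity (\sum_l (k == l)%:R * (W (a, b) (c, d) * s (c, (d, l)) (a, (b, k)))).
    by apply: eq_bigr => l _; ring.
  by rewrite sum_delta.
have trace_mid : \sum_x \sum_y W (x.1, x.2.2) (y.1, y.2.2) * (x.2.1 == y.2.1)%:R * s y x
    = \sum_p \sum_q W p q * \sum_k s (q.1, (k, q.2)) (p.1, (k, p.2)).
  rewrite sum_mid; apply: eq_bigr => -[a b] _ /=.
  under eq_bigr => k _ do rewrite sum_mid.
  rewrite exchange_big /=; apply: eq_bigr => -[c d] _ /=.
  rewrite mulr_sumr; apply: eq_bigr => k _.
  transitivity (\sum_l (k == l)%:R * (W (a, b) (c, d) * s (c, (l, d)) (a, (k, b)))).
    by apply: eq_bigr => l _; ring.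
  by rewrite sum_delta.
transitivity (2^-1 * (\sum_p \sum_q W p q * \sum_k s (q.1, (q.2, k)) (p.1, (p.2, k))
                    + \sum_p \sum_q W p q * \sum_k s (q.1, (k, q.2)) (p.1, (k, p.2)))).
  rewrite /trpair /gamma2 -big_split mulr_sumr; apply: eq_bigr => p _.
  by rewrite -big_split mulr_sumr; apply: eq_bigr => q _ /=; ring.
rewrite -trace_last -trace_mid -big_split; congr (_ * _); apply: eq_bigr => x _.
by rewrite -big_split; apply: eq_bigr => y _ /=; rewrite /gamma2_adj; ring.
Qed.

End OperatorCones.

(* Folds rather than [\sum]: big operators are locked, which would stop [vm_compute]. *)
Definition sumZ (T : Type) (f : T -> Z) (s : seq T) : Z := foldr (fun x acc => f x + acc) 0 s.
Definition sum3 (f : nat -> Z) : Z := sumZ f (iota 0 3).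
Definition all3 (P : pred nat) : bool := all P (iota 0 3).
Definition entry (t : seq (seq Z)) (i j : nat) : Z := nth 0 (nth [::] t i) j.
Definition gram (L : seq (Z * seq Z)) (i j : nat) : Z :=
  sumZ (fun cw => cw.1 * nth 0 cw.2 i * nth 0 cw.2 j) L.
Definition nonneg_weights (L : seq (Z * seq Z)) : bool := all (fun cw => 0 <= cw.1) L.
Definition idx2 (a b : nat) : nat := (3 * a + b)%N.
Definition idx3 (a b c : nat) : nat := (9 * a + 3 * b + c)%N.

Local Close Scope ring_scope.
Local Open Scope Z_scope.

(* Matrices on C^3 (x) C^3 are indexed by [idx2 a b]; Gram vectors on C^3 (x) C^3 (x) C^3 by
   [idx3 a b c]. Each Gram list [[:: (c, w); ...]] stands for sum_t c_t w_t w_t^T. *)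
Definition rhoZ : seq (seq Z) :=
  [:: [:: 8195504; 0; 0; 0; 3700408; 0; 0; 0; 3700408];
  [:: 0; 842552; 0; 0; 0; 0; -863616; 0; 0];
  [:: 0; 0; 842552; 863616; 0; 0; 0; 0; 0];
  [:: 0; 0; 863616; 1153128; 0; 0; 0; 0; 0];
  [:: 3700408; 0; 0; 0; 2643716; 0; 0; 0; 851652];
  [:: 0; 0; 0; 0; 0; 1775306; 0; 0; 0];
  [:: 0; -863616; 0; 0; 0; 0; 1153128; 0; 0];
  [:: 0; 0; 0; 0; 0; 0; 0; 1775306; 0];
  [:: 3700408; 0; 0; 0; 851652; 0; 0; 0; 2643716]].
Definition rho_sos : seq (Z * seq Z) :=
  [:: (26242748891436300, [:: 1024438; 0; 0; 0; 462551; 0; 0; 0; 462551]);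
  (255263240145132600, [:: 0; 105319; 0; 0; 0; 0; -107952; 0; 0]);
  (255263240145132600, [:: 0; 0; 105319; 107952; 0; 0; 0; 0; 0]);
  (900352165043831693187105000, [:: 0; 0; 0; 1; 0; 0; 0; 0; 0]);
  (842552, [:: 0; 0; 0; 0; 62293481925; 0; 0; 0; -52447671827]);
  (5965931166921506583605827050, [:: 0; 0; 0; 0; 0; 1; 0; 0; 0]);
  (900352165043831693187105000, [:: 0; 0; 0; 0; 0; 0; 1; 0; 0]);
  (5965931166921506583605827050, [:: 0; 0; 0; 0; 0; 0; 0; 1; 0]);
  (951847517070197183967640192, [:: 0; 0; 0; 0; 0; 0; 0; 0; 1])].
Definition rho_scale : Z := 3360508648605652537425.

Definition sigma_sos0 : seq (Z * seq Z) :=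
  [:: (1036, [:: 80; 0; 0; 0; 0; 0; 0; 0; 0; 0; 30; 0; 30; 0; 0; 0; 0; 0; 0; 0; 30; 0; 0; 0; 30; 0; 0]);
  (266, [:: 0; 0; 44; 0; 0; 0; 44; 0; 0; 12; 0; 0; 0; 0; 31; 0; 31; 0; 0; 0; 0; 0; 0; 0; 0; 0; 63]);
  (266, [:: 0; 44; 0; 44; 0; 0; 0; 0; 0; 0; 0; 0; 0; 63; 0; 0; 0; 0; -12; 0; 0; 0; 0; 31; 0; 31; 0]);
  (40000, [:: 1; 0; 0; 0; 0; 0; 0; 0; 0; 0; 0; 0; 0; 0; 0; 0; 0; 0; 0; 0; 0; 0; 0; 0; 0; 0; 0]);
  (40000, [:: 0; 1; 0; 0; 0; 0; 0; 0; 0; 0; 0; 0; 0; 0; 0; 0; 0; 0; 0; 0; 0; 0; 0; 0; 0; 0; 0]);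
  (40000, [:: 0; 0; 1; 0; 0; 0; 0; 0; 0; 0; 0; 0; 0; 0; 0; 0; 0; 0; 0; 0; 0; 0; 0; 0; 0; 0; 0]);
  (40000, [:: 0; 0; 0; 1; 0; 0; 0; 0; 0; 0; 0; 0; 0; 0; 0; 0; 0; 0; 0; 0; 0; 0; 0; 0; 0; 0; 0]);
  (40000, [:: 0; 0; 0; 0; 1; 0; 0; 0; 0; 0; 0; 0; 0; 0; 0; 0; 0; 0; 0; 0; 0; 0; 0; 0; 0; 0; 0]);
  (40000, [:: 0; 0; 0; 0; 0; 1; 0; 0; 0; 0; 0; 0; 0; 0; 0; 0; 0; 0; 0; 0; 0; 0; 0; 0; 0; 0; 0]);
  (40000, [:: 0; 0; 0; 0; 0; 0; 1; 0; 0; 0; 0; 0; 0; 0; 0; 0; 0; 0; 0; 0; 0; 0; 0; 0; 0; 0; 0]);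
  (40000, [:: 0; 0; 0; 0; 0; 0; 0; 1; 0; 0; 0; 0; 0; 0; 0; 0; 0; 0; 0; 0; 0; 0; 0; 0; 0; 0; 0]);
  (40000, [:: 0; 0; 0; 0; 0; 0; 0; 0; 1; 0; 0; 0; 0; 0; 0; 0; 0; 0; 0; 0; 0; 0; 0; 0; 0; 0; 0]);
  (40000, [:: 0; 0; 0; 0; 0; 0; 0; 0; 0; 1; 0; 0; 0; 0; 0; 0; 0; 0; 0; 0; 0; 0; 0; 0; 0; 0; 0]);
  (40000, [:: 0; 0; 0; 0; 0; 0; 0; 0; 0; 0; 1; 0; 0; 0; 0; 0; 0; 0; 0; 0; 0; 0; 0; 0; 0; 0; 0]);
  (40000, [:: 0; 0; 0; 0; 0; 0; 0; 0; 0; 0; 0; 1; 0; 0; 0; 0; 0; 0; 0; 0; 0; 0; 0; 0; 0; 0; 0]);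
  (40000, [:: 0; 0; 0; 0; 0; 0; 0; 0; 0; 0; 0; 0; 1; 0; 0; 0; 0; 0; 0; 0; 0; 0; 0; 0; 0; 0; 0]);
  (40000, [:: 0; 0; 0; 0; 0; 0; 0; 0; 0; 0; 0; 0; 0; 1; 0; 0; 0; 0; 0; 0; 0; 0; 0; 0; 0; 0; 0]);
  (40000, [:: 0; 0; 0; 0; 0; 0; 0; 0; 0; 0; 0; 0; 0; 0; 1; 0; 0; 0; 0; 0; 0; 0; 0; 0; 0; 0; 0]);
  (40000, [:: 0; 0; 0; 0; 0; 0; 0; 0; 0; 0; 0; 0; 0; 0; 0; 1; 0; 0; 0; 0; 0; 0; 0; 0; 0; 0; 0]);
  (40000, [:: 0; 0; 0; 0; 0; 0; 0; 0; 0; 0; 0; 0; 0; 0; 0; 0; 1; 0; 0; 0; 0; 0; 0; 0; 0; 0; 0]);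
  (40000, [:: 0; 0; 0; 0; 0; 0; 0; 0; 0; 0; 0; 0; 0; 0; 0; 0; 0; 1; 0; 0; 0; 0; 0; 0; 0; 0; 0]);
  (40000, [:: 0; 0; 0; 0; 0; 0; 0; 0; 0; 0; 0; 0; 0; 0; 0; 0; 0; 0; 1; 0; 0; 0; 0; 0; 0; 0; 0]);
  (40000, [:: 0; 0; 0; 0; 0; 0; 0; 0; 0; 0; 0; 0; 0; 0; 0; 0; 0; 0; 0; 1; 0; 0; 0; 0; 0; 0; 0]);
  (40000, [:: 0; 0; 0; 0; 0; 0; 0; 0; 0; 0; 0; 0; 0; 0; 0; 0; 0; 0; 0; 0; 1; 0; 0; 0; 0; 0; 0]);
  (40000, [:: 0; 0; 0; 0; 0; 0; 0; 0; 0; 0; 0; 0; 0; 0; 0; 0; 0; 0; 0; 0; 0; 1; 0; 0; 0; 0; 0]);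
  (40000, [:: 0; 0; 0; 0; 0; 0; 0; 0; 0; 0; 0; 0; 0; 0; 0; 0; 0; 0; 0; 0; 0; 0; 1; 0; 0; 0; 0]);
  (40000, [:: 0; 0; 0; 0; 0; 0; 0; 0; 0; 0; 0; 0; 0; 0; 0; 0; 0; 0; 0; 0; 0; 0; 0; 1; 0; 0; 0]);
  (40000, [:: 0; 0; 0; 0; 0; 0; 0; 0; 0; 0; 0; 0; 0; 0; 0; 0; 0; 0; 0; 0; 0; 0; 0; 0; 1; 0; 0]);
  (40000, [:: 0; 0; 0; 0; 0; 0; 0; 0; 0; 0; 0; 0; 0; 0; 0; 0; 0; 0; 0; 0; 0; 0; 0; 0; 0; 1; 0]);
  (40000, [:: 0; 0; 0; 0; 0; 0; 0; 0; 0; 0; 0; 0; 0; 0; 0; 0; 0; 0; 0; 0; 0; 0; 0; 0; 0; 0; 1])].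
Definition sigma_sos1 : seq (Z * seq Z) :=
  [:: (216, [:: 0; 0; 31; 0; 0; 0; 31; 0; 0; 0; 0; 0; 0; 0; 0; 0; 0; 72; 17; 0; 0; 0; 0; -36; 0; -36; 0]);
  (216, [:: 0; -31; 0; -31; 0; 0; 0; 0; 0; -17; 0; 0; 0; 0; -36; 0; -36; 0; 0; 0; 0; 0; 72; 0; 0; 0; 0])].

Definition witnessZ : seq (seq Z) :=
  [:: [:: 76; 0; 0; 0; -113; 0; 0; 0; -113];
  [:: 0; 203; 0; 0; 0; 0; 144; 0; 0];
  [:: 0; 0; 203; -144; 0; 0; 0; 0; 0];
  [:: 0; 0; -144; 184; 0; 0; 0; 0; 0];
  [:: -113; 0; 0; 0; 78; 0; 0; 0; 77];
  [:: 0; 0; 0; 0; 0; 1; 0; 0; 0];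
  [:: 0; 144; 0; 0; 0; 0; 184; 0; 0];
  [:: 0; 0; 0; 0; 0; 0; 0; 1; 0];
  [:: -113; 0; 0; 0; 77; 0; 0; 0; 78]].
Definition lift_sos : seq (Z * seq Z) :=
  [:: (89574889966839437568287179013424790714670637733823757087225, [:: 152; 0; 0; 0; 0; 0; 0; 0; 0; 0; -113; 0; -113; 0; 0; 0; 0; 0; 0; 0; -113; 0; 0; 0; -113; 0; 0]);
  (48800656899496754517489789283299527557813394034197889165800, [:: 0; 279; 0; 0; 0; 0; 0; 0; 0; 0; 0; 0; 0; -113; 0; 0; 0; 0; 144; 0; 0; 0; 0; 0; 0; -113; 0]);
  (48800656899496754517489789283299527557813394034197889165800, [:: 0; 0; 279; 0; 0; 0; 0; 0; 0; -144; 0; 0; 0; 0; -113; 0; 0; 0; 0; 0; 0; 0; 0; 0; 0; 0; -113]);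
  (48800656899496754517489789283299527557813394034197889165800, [:: 0; 0; 0; 279; 0; 0; 0; 0; 0; 0; 0; 0; 0; -113; 0; 0; 0; 0; 144; 0; 0; 0; 0; -113; 0; 0; 0]);
  (134141707142459059215563066108774070823940265374790256918800, [:: 0; 0; 0; 0; 203; 0; 0; 0; 0; 0; 0; 0; 0; 0; 0; 0; 0; 0; 0; 72; 0; 72; 0; 0; 0; 0; 0]);
  (134141707142459059215563066108774070823940265374790256918800, [:: 0; 0; 0; 0; 0; 203; 0; 0; 0; 0; 0; 0; -72; 0; 0; 0; 0; 0; 0; 0; 72; 0; 0; 0; 0; 0; 0]);
  (48800656899496754517489789283299527557813394034197889165800, [:: 0; 0; 0; 0; 0; 0; 279; 0; 0; -144; 0; 0; 0; 0; 0; 0; -113; 0; 0; 0; 0; 0; 0; 0; 0; 0; -113]);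
  (134141707142459059215563066108774070823940265374790256918800, [:: 0; 0; 0; 0; 0; 0; 0; 203; 0; 0; -72; 0; 0; 0; 0; 0; 0; 0; 0; 0; 0; 0; 0; 0; 72; 0; 0]);
  (134141707142459059215563066108774070823940265374790256918800, [:: 0; 0; 0; 0; 0; 0; 0; 0; 203; 0; 0; -72; 0; 0; 0; -72; 0; 0; 0; 0; 0; 0; 0; 0; 0; 0; 0]);
  (16534810808300076824749481545400310513706185272763520093824, [:: 0; 0; 0; 0; 0; 0; 0; 0; 0; 425; 0; 0; 0; 0; -113; 0; -113; 0; 0; 0; 0; 0; 0; 0; 0; 0; -226]);
  (112673598913698426148063563884091174477126452996175, [:: 0; 0; 0; 0; 0; 0; 0; 0; 0; 0; 3916229; 0; -2592107; 0; 0; 0; 0; 0; 0; 0; -216195; 0; 0; 0; -1016171; 0; 0]);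
  (2467019294928808975163921471820614095412150391267706200, [:: 0; 0; 0; 0; 0; 0; 0; 0; 0; 0; 0; 27187; 0; 0; 0; -10368; 0; 0; 0; 0; 0; 0; 0; 0; 0; 0; 0]);
  (302072628861154025094374535588986048402850, [:: 0; 0; 0; 0; 0; 0; 0; 0; 0; 0; 0; 0; 56696255796; 0; 0; 0; 0; 0; 0; 0; -29868150737; 0; 0; 0; -22899296651; 0; 0]);
  (10853031668964028581672365013521522863963837214321781200, [:: 0; 0; 0; 0; 0; 0; 0; 0; 0; 0; 0; 0; 0; 8993; 0; 0; 0; 0; 16272; 0; 0; 0; 0; 4357; 0; 4357; 0]);
  (218520465753520536807507282760554844463271453771556, [:: 0; 0; 0; 0; 0; 0; 0; 0; 0; 0; 0; 0; 0; 0; 1050932; 0; -919368; 0; 0; 0; 0; 0; 0; 0; 0; 0; 12989]);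
  (1558262010916463850846505331033559367618526436311123381949279000, [:: 0; 0; 0; 0; 0; 0; 0; 0; 0; 0; 0; 0; 0; 0; 0; 1; 0; 0; 0; 0; 0; 0; 0; 0; 0; 0; 0]);
  (3144928624858389944351267572082176604954169676331055700, [:: 0; 0; 0; 0; 0; 0; 0; 0; 0; 0; 0; 0; 0; 0; 0; 0; 4244; 0; 0; 0; 0; 0; 0; 0; 0; 0; 419]);
  (27230766549919189020759302420081136377259873871082422154516400, [:: 0; 0; 0; 0; 0; 0; 0; 0; 0; 0; 0; 0; 0; 0; 0; 0; 0; 1; 0; 0; 0; 0; 0; 0; 0; 0; 0]);
  (5194931736034250867315616279257996790128090212817116800, [:: 0; 0; 0; 0; 0; 0; 0; 0; 0; 0; 0; 0; 0; 0; 0; 0; 0; 0; 4663; 0; 0; 0; 0; 1017; 0; 1017; 0]);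
  (2467019294928808975163921471820614095412150391267706200, [:: 0; 0; 0; 0; 0; 0; 0; 0; 0; 0; 0; 0; 0; 0; 0; 0; 0; 0; 0; 27187; 0; -10368; 0; 0; 0; 0; 0]);
  (4801510477657122966251063135635606600350, [:: 0; 0; 0; 0; 0; 0; 0; 0; 0; 0; 0; 0; 0; 0; 0; 0; 0; 0; 0; 0; 550161627907; 0; 0; 0; -520569765563; 0; 0]);
  (1558262010916463850846505331033559367618526436311123381949279000, [:: 0; 0; 0; 0; 0; 0; 0; 0; 0; 0; 0; 0; 0; 0; 0; 0; 0; 0; 0; 0; 0; 1; 0; 0; 0; 0; 0]);
  (27230766549919189020759302420081136377259873871082422154516400, [:: 0; 0; 0; 0; 0; 0; 0; 0; 0; 0; 0; 0; 0; 0; 0; 0; 0; 0; 0; 0; 0; 0; 1; 0; 0; 0; 0]);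
  (1817279524314324176188685718645621416266605868400, [:: 0; 0; 0; 0; 0; 0; 0; 0; 0; 0; 0; 0; 0; 0; 0; 0; 0; 0; 0; 0; 0; 0; 0; 11517773; 0; -10099895; 0]);
  (152135552202124841861160778189745656077073721984987505460788000, [:: 0; 0; 0; 0; 0; 0; 0; 0; 0; 0; 0; 0; 0; 0; 0; 0; 0; 0; 0; 0; 0; 0; 0; 0; 1; 0; 0]);
  (55701826993170613889145090846214752225189016305802369128873600, [:: 0; 0; 0; 0; 0; 0; 0; 0; 0; 0; 0; 0; 0; 0; 0; 0; 0; 0; 0; 0; 0; 0; 0; 0; 0; 1; 0]);
  (32607623847005023233623651012924678385776314564759865548834200, [:: 0; 0; 0; 0; 0; 0; 0; 0; 0; 0; 0; 0; 0; 0; 0; 0; 0; 0; 0; 0; 0; 0; 0; 0; 0; 0; 1])].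
Definition lift_scale : Z := 13615383274959594510379651210040568188629936935541211077258200.

Local Close Scope Z_scope.
Local Open Scope ring_scope.

Definition trpairZ (t1 t2 : seq (seq Z)) : Z :=
  sum3 (fun a => sum3 (fun b => sum3 (fun a' => sum3 (fun b' =>
    entry t1 (idx2 a b) (idx2 a' b') * entry t2 (idx2 a' b') (idx2 a b))))).
(* The [sigma_sos1] term carries the partial transpose on the first factor. *)
Definition sigmaZ (a b c a' b' c' : nat) : Z :=
  gram sigma_sos0 (idx3 a b c) (idx3 a' b' c') + gram sigma_sos1 (idx3 a' b c) (idx3 a b' c').

Lemma sos_weights_nonneg :
  [&& nonneg_weights rho_sos, nonneg_weights sigma_sos0, nonneg_weights sigma_sos1
    & nonneg_weights lift_sos].
Proof. by vm_compute. Qed.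

Lemma sos_scales_gt0 : (0 < rho_scale) && (0 < lift_scale).
Proof. by vm_compute. Qed.

Lemma rho_sos_cert :
  all3 (fun a => all3 (fun b => all3 (fun a' => all3 (fun b' =>
    rho_scale * entry rhoZ (idx2 a b) (idx2 a' b') == gram rho_sos (idx2 a b) (idx2 a' b'))))).
Proof. by vm_compute. Qed.

Lemma sigma_extends_rhoZ :
  all3 (fun a => all3 (fun b => all3 (fun a' => all3 (fun b' =>
    2 * entry rhoZ (idx2 a b) (idx2 a' b') ==
    sum3 (fun k => sigmaZ a b k a' b' k + sigmaZ a k b a' k b'))))).
Proof. by vm_compute. Qed.

Lemma lift_sos_cert :
  all3 (fun a => all3 (fun b => all3 (fun c => all3 (fun a' => all3 (fun b' => all3 (fun c' =>
    lift_scale * (entry witnessZ (idx2 a b) (idx2 a' b') * (c == c')%:R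
                  + entry witnessZ (idx2 a c) (idx2 a' c') * (b == b')%:R)
    == gram lift_sos (idx3 a b c) (idx3 a' b' c'))))))).
Proof. by vm_compute. Qed.

Lemma witness_rhoZ_neg : trpairZ witnessZ rhoZ < 0.
Proof. by vm_compute. Qed.

Section Example.
Variable C : numClosedFieldType.

Definition ofZ : {rmorphism Z -> C} := intr \o int_of_Z.

Lemma conj_ofZ (z : Z) : (ofZ z)^* = ofZ z.
Proof. by rewrite conj_Creal //= realz. Qed.

Lemma ofZ_ge0 (z : Z) : 0 <= z -> 0 <= ofZ z.
Proof. by case: z => //= p _; rewrite ler0z. Qed.

Lemma ofZ_gt0 (z : Z) : 0 < z -> 0 < ofZ z.
Proof.
rewrite !lt0r => /andP[z_neq0 z_ge0]; rewrite ofZ_ge0 // andbT.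
by rewrite /= intr_eq0 -(rmorph0 int_of_Z) (can_eq int_of_ZK).
Qed.

Lemma ofZ_lt0 (z : Z) : z < 0 -> ofZ z < 0.
Proof. by rewrite -!oppr_gt0 -rmorphN; apply: ofZ_gt0. Qed.

Lemma ofZ_sumZ (T : Type) (f : T -> Z) (s : seq T) :
  ofZ (sumZ f s) = \sum_(x <- s) ofZ (f x).
Proof.
elim: s => [|x s IH]; first by rewrite big_nil rmorph0.
by rewrite big_cons -IH -rmorphD.
Qed.

Lemma ofZ_sum3 (f : nat -> Z) : ofZ (sum3 f) = \sum_(i < 3) ofZ (f i).
Proof. by rewrite ofZ_sumZ -[iota 0 3]/(index_iota 0 3) big_mkord. Qed.

Lemma all3P (P : pred nat) : all3 P -> forall i : 'I_3, P i.
Proof. by move=> /allP P3 i; apply: P3; rewrite mem_iota ltn_ord. Qed.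

Definition gram_op (I : finType) (code : I -> nat) (k : Z) (L : seq (Z * seq Z)) : op C I :=
  opsum L (fun cw => ofZ cw.1 / ofZ k) (fun cw => rank1 (fun x => ofZ (nth 0 cw.2 (code x)))).

Lemma gram_opE (I : finType) (code : I -> nat) (k : Z) (L : seq (Z * seq Z)) (x y : I) :
  ofZ k != 0 -> ofZ k * gram_op code k L x y = ofZ (gram L (code x) (code y)).
Proof.
move=> k_neq0; rewrite ofZ_sumZ mulr_sumr; apply: eq_bigr => cw _.
by rewrite /rank1 conj_ofZ !rmorphM /=; field.
Qed.

Lemma gram_weights_ge0 (k : Z) (L : seq (Z * seq Z)) :
  0 < k -> nonneg_weights L -> {in L, forall cw, 0 <= ofZ cw.1 / ofZ k}.
Proof.
move=> k_gt0 /allP L_ge0 cw /L_ge0 w_ge0.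
by apply: divr_ge0; [exact: ofZ_ge0 | exact/ltW/ofZ_gt0].
Qed.

Lemma gram_op1E (I : finType) (code : I -> nat) (L : seq (Z * seq Z)) (x y : I) :
  gram_op code 1 L x y = ofZ (gram L (code x) (code y)).
Proof.
have ofZ1_neq0 : ofZ 1 != 0 by rewrite rmorph1 oner_neq0.
by rewrite -(gram_opE code L x y ofZ1_neq0) rmorph1 mul1r.
Qed.

Definition code2 (p : 'I_3 * 'I_3) : nat := idx2 p.1 p.2.
Definition code3 (x : 'I_3 * ('I_3 * 'I_3)) : nat := idx3 x.1 x.2.1 x.2.2.
Definition tab_op (t : seq (seq Z)) : op C ('I_3 * 'I_3)%type :=
  fun p q => ofZ (entry t (code2 p) (code2 q)).

Lemma trpair_tab_op (t1 t2 : seq (seq Z)) :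
  trpair (tab_op t1) (tab_op t2) = ofZ (trpairZ t1 t2).
Proof.
rewrite /trpair sum_pair ofZ_sum3; apply: eq_bigr => a _.
rewrite ofZ_sum3; apply: eq_bigr => b _.
rewrite sum_pair ofZ_sum3; apply: eq_bigr => a' _.
by rewrite ofZ_sum3; apply: eq_bigr => b' _; rewrite rmorphM.
Qed.

Definition rho := tab_op rhoZ.
Definition witness := tab_op witnessZ.
Definition sigma : op C ('I_3 * ('I_3 * 'I_3))%type :=
  fun x y => gram_op code3 1 sigma_sos0 x y + ptA (gram_op code3 1 sigma_sos1) x y.

Lemma rho_gram : rho = gram_op code2 rho_scale rho_sos.
Proof.
have /andP[rs_gt0 _] := sos_scales_gt0.
have rs_neq0 : ofZ rho_scale != 0 by rewrite lt0r_neq0 ?ofZ_gt0.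
apply: op_ext => -[a b] [a' b']; apply: (mulfI rs_neq0); rewrite gram_opE //.
have := all3P rho_sos_cert a; move/all3P/(_ b)/all3P/(_ a')/all3P/(_ b')/eqP <-.
by rewrite rmorphM.
Qed.

Lemma psd_rho : psd rho.
Proof.
have /and4P[rho_w _ _ _] := sos_weights_nonneg.
have /andP[rs_gt0 _] := sos_scales_gt0.
rewrite rho_gram; apply: psd_opsum; first exact: gram_weights_ge0.
by move=> cw _; apply: psd_rank1.
Qed.

Lemma sigmaE (x y : 'I_3 * ('I_3 * 'I_3)) :
  sigma x y = ofZ (sigmaZ x.1 x.2.1 x.2.2 y.1 y.2.1 y.2.2).
Proof. by rewrite /sigma /ptA !gram_op1E -rmorphD. Qed.

Lemma maxtens_sigma : maxtens (@psd C 'I_3) (maxtens (@psd C 'I_3) (@psd C 'I_3)) sigma.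
Proof.
have /and4P[_ s0_w s1_w _] := sos_weights_nonneg.
have gram_maxtens L : nonneg_weights L ->
    maxtens (@psd C 'I_3) (maxtens (@psd C 'I_3) (@psd C 'I_3)) (gram_op code3 1 L).
  move=> L_w; apply: maxtens_opsum; first exact: gram_weights_ge0 ltr01 L_w.
  by move=> cw _; apply/maxtens_rank1/psd_dual_maxtens.
by apply: maxtens_add; [exact: gram_maxtens | exact/maxtens_ptA/gram_maxtens].
Qed.

Lemma rho_gamma2_sigma (p q : 'I_3 * 'I_3) : rho p q = gamma2 sigma p q.
Proof.
case: p q => [a b] [a' b'].
have := all3P sigma_extends_rhoZ a; move/all3P/(_ b)/all3P/(_ a')/all3P/(_ b').
move=> /eqP/(congr1 ofZ); rewrite rmorphM rmorph_nat ofZ_sum3 => two_rho.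
rewrite /gamma2 -big_split /=.
under eq_bigr => k _ do rewrite !sigmaE -rmorphD /=.
by rewrite -two_rho mulKf ?pnatr_eq0.
Qed.

Lemma lift_witness_gram : gamma2_adj witness = gram_op code3 lift_scale lift_sos.
Proof.
have /andP[_ ls_gt0] := sos_scales_gt0.
have ls_neq0 : ofZ lift_scale != 0 by rewrite lt0r_neq0 ?ofZ_gt0.
apply: op_ext => -[a [b c]] [a' [b' c']]; apply: (mulfI ls_neq0); rewrite gram_opE //.
have := all3P lift_sos_cert a; move/all3P/(_ b)/all3P/(_ c)/all3P/(_ a')/all3P/(_ b').
move/all3P/(_ c')/eqP <-.
by rewrite /gamma2_adj !rmorphM rmorphD !rmorphM !rmorph_nat.
Qed.

Lemma not_psd_extendible2_rho : ~ psd_extendible2 rho.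
Proof.
move=> [_ [s [[_ s_ge0] rho_s]]].
have /and4P[_ _ _ lift_w] := sos_weights_nonneg.
have /andP[_ ls_gt0] := sos_scales_gt0.
have lift_s_ge0 : 0 <= trpair (gamma2_adj witness) s.
  rewrite lift_witness_gram trpairC; apply: trpair_opsum_ge0.
    exact: gram_weights_ge0.
  by move=> cw _; rewrite trpair_rank1.
have := ofZ_lt0 witness_rhoZ_neg.
rewrite -trpair_tab_op -/witness -/rho (op_ext rho_s) trpair_gamma2.
by rewrite le_gtF // mulr_ge0 // invr_ge0 ler0n.
Qed.

End Example.

Theorem proposition1 (R : realType) :
  exists rho : op R[i] ('I_3 * 'I_3)%type,
    psd rho /\ max_extendible2 rho /\ ~ psd_extendible2 rho.
Proof.
exists (rho R[i]); split; first exact: psd_rho.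
split; last exact: not_psd_extendible2_rho.
split; first exact: psd_rho.
by exists (sigma R[i]); split; [exact: maxtens_sigma | exact: rho_gamma2_sigma].
Qed.
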